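(* Let $N$ be a well-formed system (i.e. $N$ is coherent and $\vdash N:\mathbf{ok}$ is derivable) in the calculus with set policies. If $N \to N'$, then $N'$ is also well-formed; in particular $\vdash N':\mathbf{ok}$.
   Context: Fix two disjoint sets: basic actions $\mathsf{Act}$ (ranged over by $a,b,\dots$) and localities $\mathsf{Loc}$ (ranged over by $l,k,h,\dots$). In this setting a policy is a finite subset of $\mathsf{Act}\cup\mathsf{Loc}$, and $T_1 \ \mathtt{enforces}\ T_2$ means $T_1\subseteq T_2$. Agents: $P,Q,R ::= \mathbf{nil} \mid a.P \mid \mathbf{go}_T\, l.P \mid P\,|\,Q \mid\ !P$, where $T$ is a policy (the digest of $P$). Systems: $N ::= \mathbf{0} \mid l[\![M \rhd P]\!] \mid N_1\parallel N_2$; site names in a system are pairwise distinct, and $M^l$ denotes the membrane of site $l$. A membrane is a pair $M=(M_t,M_p)$ where $M_t$ is a partial function from $\mathsf{Loc}$ to $\{\mathtt{loc},\mathtt{lgood},\mathtt{lbad}\}$ and $M_p$ is a policy. Structural equivalence $\equiv$ is the least congruence on systems such that, inside a site, $|$ is commutative and associative with unit $\mathbf{nil}$ and $l[\![M\rhd\ !P\,|\,Q]\!]\equiv l[\![M\rhd P\,|\,!P\,|\,Q]\!]$, and $\parallel$ is commutative and associative with unit $\mathbf{0}$. Reduction $\to$ is the least relation with: (act) $l[\![M\rhd a.P\,|\,Q]\!]\to l[\![M\rhd P\,|\,Q]\!]$; (par) $N_1\to N_1'$ implies $N_1\parallel N_2\to N_1'\parallel N_2$; (struct) $N\equiv N_1\to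 N_1'\equiv N'$ implies $N\to N'$; (mig) $k[\![M^k\rhd \mathbf{go}_T\,l.P\,|\,Q]\!]\parallel l[\![M^l\rhd R]\!]\to k[\![M^k\rhd Q]\!]\parallel l[\![M^l\rhd P\,|\,R]\!]$ provided $M^l\vdash^k_T P$, where $M^l\vdash^k_T P$ means: if $M^l_t(k)=\mathtt{lgood}$ then $T\subseteq M^l_p$, else $\vdash P:M^l_p$. The judgement $\vdash P:T$ is the least relation with: $\vdash\mathbf{nil}:T$; $\vdash a.P:T$ if $a\in T$ and $\vdash P:T$; $\vdash \mathbf{go}_{T'}\,l.P:T$ if $l\in T$ and $\vdash P:T'$; $\vdash\ !P:T$ if $\vdash P:T$; $\vdash P|Q:T$ if $\vdash P:T$ and $\vdash Q:T$. Trust order: $<:$ is the reflexive relation with $\mathtt{loc}<:\mathtt{lbad}$ and $\mathtt{loc}<:\mathtt{lgood}$. A site $k$ of $N$ is trustworthy if $M^k_t(k)=\mathtt{lgood}$. $N$ is coherent if for every trustworthy site $k$ and every site $l$ of $N$ with $M^k_t(l)$ defined, $M^k_t(l)<: M^l_t(l)$. The judgement $\vdash N:\mathbf{ok}$ is the least relation with: $\vdash\mathbf{0}:\mathbf{ok}$; $\vdash N_1\parallel N_2:\mathbf{ok}$ if both $\vdash N_i:\mathbf{ok}$; $\vdash l[\![M\rhd P]\!]:\mathbf{ok}$ if $l$ is trustworthy and $\vdash P:M_p$; $\vdash l[\![M\rhd P]\!]:\mathbf{ok}$ if $l$ is not trustworthy. *)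

From Stdlib Require Import List.
Import ListNotations.
Set Implicit Arguments.

Section Calculus.
Variables Act Loc : Type.

Definition policy := list (Act + Loc).
Definition enforces (T1 T2 : policy) : Prop := incl T1 T2.
Definition inAct (a : Act) (T : policy) : Prop := In (inl a) T.
Definition inLoc (l : Loc) (T : policy) : Prop := In (inr l) T.

Inductive trust := tloc | lgood | lbad.

Inductive trust_le : trust -> trust -> Prop :=
| trust_le_refl t : trust_le t t
| trust_le_bad : trust_le tloc lbad
| trust_le_good : trust_le tloc lgood.

Record membrane := Membrane {
  mt : Loc -> option trust;
  mp : policy }.

Inductive agent :=
| Nil
| Act_ (a : Act) (P : agent)
| Go (T : policy) (l : Loc) (P : agent)
| Par (P Q : agent)
| Bang (P : agent).

Inductive system :=
| Zero
| Site (l : Loc) (M : membrane) (P : agent)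
| PPar (N1 N2 : system).

Inductive typed : agent -> policy -> Prop :=
| ty_nil T : typed Nil T
| ty_act a P T : inAct a T -> typed P T -> typed (Act_ a P) T
| ty_go T' l P T : inLoc l T -> typed P T' -> typed (Go T' l P) T
| ty_bang P T : typed P T -> typed (Bang P) T
| ty_par P Q T : typed P T -> typed Q T -> typed (Par P Q) T.

Fixpoint sites (N : system) : list (Loc * membrane * agent) :=
  match N with
  | Zero => []
  | Site l M P => [(l, M, P)]
  | PPar N1 N2 => sites N1 ++ sites N2
  end.

Definition site_names (N : system) : list Loc :=
  map (fun s => fst (fst s)) (sites N).

Definition distinct_sites (N : system) : Prop := NoDup (site_names N).

Definition trustworthy (k : Loc) (M : membrane) : Prop := mt M k = Some lgood.

Definition coherent (N : system) : Prop :=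
  forall k Mk Pk l Ml Pl,
    In (k, Mk, Pk) (sites N) -> In (l, Ml, Pl) (sites N) ->
    trustworthy k Mk ->
    forall t, mt Mk l = Some t ->
    exists t', mt Ml l = Some t' /\ trust_le t t'.

Inductive ok : system -> Prop :=
| ok_zero : ok Zero
| ok_par N1 N2 : ok N1 -> ok N2 -> ok (PPar N1 N2)
| ok_trusted l M P : trustworthy l M -> typed P (mp M) -> ok (Site l M P)
| ok_untrusted l M P : ~ trustworthy l M -> ok (Site l M P).

Definition well_formed (N : system) : Prop := coherent N /\ ok N.

Inductive sequiv : system -> system -> Prop :=
| se_refl N : sequiv N N
| se_sym N1 N2 : sequiv N1 N2 -> sequiv N2 N1
| se_trans N1 N2 N3 : sequiv N1 N2 -> sequiv N2 N3 -> sequiv N1 N3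
| se_ppar N1 N1' N2 N2' : sequiv N1 N1' -> sequiv N2 N2' ->
    sequiv (PPar N1 N2) (PPar N1' N2')
| se_site_comm l M P Q : sequiv (Site l M (Par P Q)) (Site l M (Par Q P))
| se_site_assoc l M P Q R :
    sequiv (Site l M (Par (Par P Q) R)) (Site l M (Par P (Par Q R)))
| se_site_unit l M P : sequiv (Site l M (Par P Nil)) (Site l M P)
| se_site_bang l M P Q :
    sequiv (Site l M (Par (Bang P) Q)) (Site l M (Par P (Par (Bang P) Q)))
| se_ppar_comm N1 N2 : sequiv (PPar N1 N2) (PPar N2 N1)
| se_ppar_assoc N1 N2 N3 :
    sequiv (PPar (PPar N1 N2) N3) (PPar N1 (PPar N2 N3))
| se_ppar_unit N : sequiv (PPar N Zero) N.

Definition mig_ok (Ml : membrane) (k : Loc) (T : policy) (P : agent) : Prop :=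
  match mt Ml k with
  | Some lgood => enforces T (mp Ml)
  | _ => typed P (mp Ml)
  end.

Inductive red : system -> system -> Prop :=
| r_act l M a P Q : red (Site l M (Par (Act_ a P) Q)) (Site l M (Par P Q))
| r_par N1 N1' N2 : red N1 N1' -> red (PPar N1 N2) (PPar N1' N2)
| r_struct N N1 N1' N' : sequiv N N1 -> red N1 N1' -> sequiv N1' N' -> red N N'
| r_mig k Mk T l P Q Ml R : mig_ok Ml k T P ->
    red (PPar (Site k Mk (Par (Go T l P) Q)) (Site l Ml R))
        (PPar (Site k Mk Q) (Site l Ml (Par P R))).

End Calculus.

(** Coherence only inspects the pairs (name, membrane) of the sites, and
    neither structural equivalence nor reduction changes this multiset, so
    coherence is preserved.  Typing of trustworthy sites is preserved by the
    structural laws and by action steps; for a migration into a trustworthy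
    site [l] the only delicate case is the one where [l] trusts the sender [k]
    and checks nothing but the digest [T].  Coherence then forces [k] to be
    trustworthy itself, so the migrating agent is well typed at [k], hence
    [P : T], and [T] is included in the policy of [l]. *)

From Stdlib Require Import List Permutation.

Set Implicit Arguments.

Section Preservation.
Variables Act Loc : Type.

Implicit Types (N : system Act Loc) (P Q : agent Act Loc) (M : membrane Act Loc).

Definition site_membranes N : list (Loc * membrane Act Loc) := map fst (sites N).

Lemma coherent_incl N N' :
  incl (site_membranes N') (site_membranes N) -> coherent N -> coherent N'.
Proof.
  intros Hincl Hcoh k Mk Pk l Ml Pl Hk Hl.
  assert (Hk' : In (k, Mk) (site_membranes N)).
  { apply Hincl, (in_map fst _ (k, Mk, Pk)), Hk. }
  assert (Hl' : In (l, Ml) (site_membranes N)).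
  { apply Hincl, (in_map fst _ (l, Ml, Pl)), Hl. }
  apply in_map_iff in Hk' as [[[k0 Mk0] Pk0] [Ek HkN]].
  apply in_map_iff in Hl' as [[[l0 Ml0] Pl0] [El HlN]].
  simpl in Ek, El; injection Ek as -> ->; injection El as -> ->.
  exact (Hcoh _ _ _ _ _ _ HkN HlN).
Qed.

Lemma coherent_perm N N' :
  Permutation (site_membranes N) (site_membranes N') -> coherent N -> coherent N'.
Proof.
  intros Hperm; apply coherent_incl.
  intros x; apply Permutation_in, Permutation_sym, Hperm.
Qed.

Lemma coherent_good_trustworthy N k Mk Pk l Ml Pl :
  coherent N -> In (k, Mk, Pk) (sites N) -> In (l, Ml, Pl) (sites N) ->
  trustworthy l Ml -> mt Ml k = Some lgood -> trustworthy k Mk.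
Proof.
  intros Hcoh Hk Hl Htrust Hgood.
  destruct (Hcoh _ _ _ _ _ _ Hl Hk Htrust _ Hgood) as [t [Ht Hle]].
  inversion Hle; subst; exact Ht.
Qed.

Lemma typed_weaken P T T' : typed P T -> incl T T' -> typed P T'.
Proof.
  intros Hty; revert T'.
  induction Hty; intros T0 Hincl; constructor; unfold inAct, inLoc in *; auto.
Qed.

Lemma typed_par P Q T : typed (Par P Q) T <-> typed P T /\ typed Q T.
Proof.
  split; [intros Hty; inversion Hty; auto | intros [HP HQ]; constructor; auto].
Qed.

Lemma typed_bang P T : typed (Bang P) T <-> typed P T.
Proof. split; [intros Hty; inversion Hty; auto | apply ty_bang]. Qed.

Lemma ok_site l M P : ok (Site l M P) <-> (trustworthy l M -> typed P (mp M)).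
Proof.
  split.
  - intros Hok Htrust; inversion Hok; subst; [assumption | contradiction].
  - intros Hty; unfold trustworthy in *.
    destruct (mt M l) as [[| |]|] eqn:E;
      solve [apply ok_trusted; auto | apply ok_untrusted; congruence].
Qed.

Lemma ok_ppar N1 N2 : ok (PPar N1 N2) <-> ok N1 /\ ok N2.
Proof.
  split; [intros Hok; inversion Hok; auto | intros [H1 H2]; constructor; auto].
Qed.

Lemma sequiv_ok N1 N2 : sequiv N1 N2 -> (ok N1 <-> ok N2).
Proof.
  induction 1; rewrite ?ok_site, ?ok_ppar, ?typed_par, ?typed_bang; try tauto.
  - split; [tauto | intros HP Htrust; split; [auto | constructor]].
  - split; [tauto | intros HN; split; [auto | constructor]].
Qed.

Lemma sequiv_site_membranes N1 N2 :
  sequiv N1 N2 -> Permutation (site_membranes N1) (site_membranes N2).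
Proof.
  unfold site_membranes.
  induction 1; simpl; rewrite ?map_app.
  all: eauto using Permutation_sym, Permutation_trans, Permutation_app,
         Permutation_app_comm.
  rewrite app_assoc; reflexivity.
Qed.

Lemma red_site_membranes N N' :
  red N N' -> Permutation (site_membranes N) (site_membranes N').
Proof.
  induction 1; try reflexivity.
  - unfold site_membranes in *; simpl; rewrite !map_app.
    apply Permutation_app_tail; assumption.
  - apply sequiv_site_membranes in H, H1; eauto using Permutation_trans.
Qed.

Lemma red_coherent N N' : red N N' -> coherent N -> coherent N'.
Proof. intros Hred; apply coherent_perm, red_site_membranes, Hred. Qed.

Lemma migrant_typed k Mk T l P Q Ml :
  ok (Site k Mk (Par (Go T l P) Q)) ->
  (mt Ml k = Some lgood -> trustworthy k Mk) ->
  mig_ok Ml k T P -> typed P (mp Ml).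
Proof.
  unfold mig_ok; intros Hok Hgood Hmig.
  destruct (mt Ml k) as [[| |]|] eqn:E; auto.
  apply ok_site in Hok; [|auto].
  apply typed_par in Hok as [Hgo _]; inversion Hgo; subst.
  eapply typed_weaken; eassumption.
Qed.

Lemma red_ok N N' : red N N' -> coherent N -> ok N -> ok N'.
Proof.
  induction 1 as [l M a P Q | N1 N1' N2 Hred IH
                 | N N1 N1' N' Heq Hred IH Heq' | k Mk T l P Q Ml R Hmig];
    intros Hcoh Hok.
  - rewrite ok_site, typed_par in *; intros Htrust.
    destruct (Hok Htrust) as [Hact HQ]; inversion Hact; auto.
  - rewrite ok_ppar in *; destruct Hok; split; auto.
    apply IH; auto; apply coherent_incl with (PPar N1 N2); auto.
    unfold site_membranes; simpl; rewrite map_app; apply incl_appl, incl_refl.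
  - apply (sequiv_ok Heq'), IH; [| apply (sequiv_ok Heq); auto].
    eapply coherent_perm; [apply sequiv_site_membranes, Heq | exact Hcoh].
  - apply ok_ppar in Hok as [Hk Hl]; apply ok_ppar; split.
    + apply ok_site; intros Htrust.
      apply ok_site, typed_par in Hk as [_ HQ]; assumption.
    + apply ok_site; intros Htrust; apply typed_par; split.
      * eapply migrant_typed; [exact Hk | | exact Hmig].
        eapply coherent_good_trustworthy; eauto; simpl; auto.
      * apply ok_site in Hl; auto.
Qed.

End Preservation.

Theorem mainTheorem1 (Act Loc : Type) (N N' : system Act Loc) :
  distinct_sites N -> coherent N -> ok N -> red N N' ->
  well_formed N' /\ ok N'.
Proof.
  intros _ Hcoh Hok Hred.
  assert (Hok' : ok N') by exact (red_ok Hred Hcoh Hok).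
  repeat split; [exact (red_coherent Hred Hcoh) | exact Hok' | exact Hok'].
Qed.
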